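(* Let $X=\{0,1\}$ and let $G_L$ be the group of automorphisms of the binary tree $X^*$ generated by $a,b$ defined by the wreath recursions $a=\psi_a(a,\mathbb 1)$, $b=\psi_b(b,a)$, where $\psi_a=(0\,1)$ and $\psi_b$ is the identity, i.e. $a(0w)=1a(w)$, $a(1w)=0w$, $b(0w)=0b(w)$, $b(1w)=1a(w)$. Let $\Gamma_n$ denote the Schreier graph of $G_L$ on $X^n$ with respect to $S=\{a,b,a^{-1},b^{-1}\}$. Then: (1) if $m>n\ge1$, the map $\pi:\Gamma_m\to\Gamma_n$, $\pi(x_1\cdots x_m)=x_1\cdots x_n$, is an unramified covering; (2) for every $n\ge1$, $\pi:\Gamma_{n+1}\to\Gamma_n$ is a normal (Galois) covering with Galois group $\mathrm{Gal}(\Gamma_{n+1}|\Gamma_n)\cong\mathbb Z/2\mathbb Z$.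
   Context: Schreier graph $\Gamma_n$: vertex set $X^n$; for every $v\in X^n$ and $s\in S$ an edge joining $v$ and $s(v)$ (the edge from $s$ at $v$ identified with the one from $s^{-1}$ at $s(v)$), so $\Gamma_n$ is a $4$-regular multigraph with loops allowed. A surjective graph map $\pi:\widetilde Y\to Y$ is an unramified covering if for every vertex $u$ of $Y$ and $v\in\pi^{-1}(u)$ it maps the neighbours of $v$ bijectively onto the neighbours of $u$; it is $d$-sheeted if fibres have size $d$, and normal (Galois) if there are $d$ graph automorphisms $\sigma$ of $\widetilde Y$ with $\pi\circ\sigma=\pi$, forming the Galois group. *)

From HB Require Import structures.
From mathcomp Require Import all_boot all_order all_algebra.
Set Implicit Arguments. Unset Strict Implicit. Unset Printing Implicit Defensive.

(* ---------- Generic finite multigraphs (with loops / multiple edges) ------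
   A multigraph is given by a finite vertex type V, a finite type D of darts
   (oriented half-edges), the origin map org : D -> V and the reversal
   rev : D -> D (each undirected edge = a pair {d, rev d}; a loop has both
   darts based at the same vertex).  The neighbours of v (with multiplicity)
   are the darts d with org d = v (the neighbour is org (rev d)). *)

Section Generic.
Variables (V D V' D' : finType).
Variables (org : D -> V) (rev : D -> D) (org' : D' -> V') (rev' : D' -> D').

Definition graph_map (fV : V -> V') (fD : D -> D') : Prop :=
  (forall d, org' (fD d) = fV (org d)) /\ (forall d, fD (rev d) = rev' (fD d)).

Definition unramified_covering (fV : V -> V') (fD : D -> D') : Prop :=
  [/\ graph_map fV fD,
      (forall u : V', exists v : V, fV v = u) &
      (forall (v : V) (e : D'), org' e = fV v ->
          exists! d : D, org d = v /\ fD d = e)].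

Definition sheeted (fV : V -> V') (k : nat) : Prop :=
  forall u : V', #|[pred v | fV v == u]| = k.

Definition is_deck (fV : V -> V') (fD : D -> D')
   (s : {ffun V -> V} * {ffun D -> D}) : bool :=
  [&& injectiveb s.1, injectiveb s.2,
      [forall d, org (s.2 d) == s.1 (org d)],
      [forall d, s.2 (rev d) == rev (s.2 d)],
      [forall v, fV (s.1 v) == fV v] &
      [forall d, fD (s.2 d) == fD d]].

Definition deck_group (fV : V -> V') (fD : D -> D')
  : {set {ffun V -> V} * {ffun D -> D}} := [set s | is_deck fV fD s].

Definition deck_comp (s t : {ffun V -> V} * {ffun D -> D})
  : {ffun V -> V} * {ffun D -> D} :=
  ([ffun v => s.1 (t.1 v)], [ffun d => s.2 (t.2 d)]).

Definition normal_covering (fV : V -> V') (fD : D -> D') : Prop :=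
  unramified_covering fV fD /\
  exists k, sheeted fV k /\ #|deck_group fV fD| = k.

End Generic.

(* ---------- The group G_L acting on the binary tree ---------------------
   X = {0,1} encoded as bool with 0 = false, 1 = true.
   a(0w) = 1 a(w), a(1w) = 0 w ;  b(0w) = 0 b(w), b(1w) = 1 a(w). *)

Fixpoint actA (w : seq bool) : seq bool :=
  match w with
  | [::] => [::]
  | false :: w' => true :: actA w'
  | true :: w' => false :: w'
  end.

Fixpoint actB (w : seq bool) : seq bool :=
  match w with
  | [::] => [::]
  | false :: w' => false :: actB w'
  | true :: w' => true :: actA w'
  end.

Lemma size_actA w : size (actA w) = size w.
Proof. by elim: w => [|[] w IH] //=; rewrite IH. Qed.

Lemma size_actB w : size (actB w) = size w.
Proof. by elim: w => [|[] w IH] //=; rewrite ?IH ?size_actA. Qed.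

Definition tA n (t : n.-tuple bool) : n.-tuple bool :=
  @Tuple n bool (actA t) (introT eqP (etrans (size_actA t) (size_tuple t))).
Definition tB n (t : n.-tuple bool) : n.-tuple bool :=
  @Tuple n bool (actB t) (introT eqP (etrans (size_actB t) (size_tuple t))).

Definition gen_act n (s : bool) : n.-tuple bool -> n.-tuple bool :=
  if s then @tB n else @tA n.

(* ---------- Schreier graph Gamma_n ---------------------------------------
   Vertices X^n; one edge for each (v, s) with v in X^n, s in {a, b}
   joining v and s(v) (this is the edge of s at v, identified with the edge
   of s^-1 at s(v)). *)
Definition SVert n := (n.-tuple bool)%type.
Definition SDart n := ((n.-tuple bool * bool) * bool)%type.

Definition sorg n (d : SDart n) : SVert n :=
  let: ((v, s), o) := d in if o then v else gen_act s v.
Definition srev n (d : SDart n) : SDart n :=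
  let: ((v, s), o) := d in ((v, s), ~~ o).

Definition projV n m (t : m.-tuple bool) : n.-tuple bool :=
  [tuple nth false t i | i < n].
Definition projD n m (d : SDart m) : SDart n :=
  let: ((v, s), o) := d in ((projV n v, s), o).

From HB Require Import structures.
From mathcomp Require Import all_boot all_order all_algebra.

Set Implicit Arguments.
Unset Strict Implicit.
Unset Printing Implicit Defensive.

(* Both generators are automorphisms of the binary tree, i.e. they act on the
   last letter of a word [u x] by a translation of [X = Z/2] depending only on
   [u].  Hence truncation commutes with the action, which makes the projections
   [X^m -> X^n] graph coverings, and flipping the last letter commutes with the
   action, which gives a nontrivial deck transformation of [Gamma_(n+1) ->
   Gamma_n].  Since [a] acts transitively on every level, a deck transformation
   is determined by the image of a single vertex, which lies in a fibre of size
   two; so there are exactly two of them. *)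

Definition tree_automorphism (f : seq bool -> seq bool) : Prop :=
  f [::] = [::] /\
  forall u, exists c, forall x, f (rcons u x) = rcons (f u) (x (+) c).

Section TreeAutomorphism.

Variable f : seq bool -> seq bool.
Hypothesis f_aut : tree_automorphism f.

Lemma size_tree_aut w : size (f w) = size w.
Proof.
case: f_aut => f_nil f_rcons; elim/last_ind: w => [|u x IHu]; first by rewrite f_nil.
by have [c ->] := f_rcons u; rewrite !size_rcons IHu.
Qed.

Lemma take_tree_aut n w : take n (f w) = f (take n w).
Proof.
case: f_aut => f_nil f_rcons; elim/last_ind: w => [|u x IHu] /=; first by rewrite f_nil.
have [lt_u_n | le_n_u] := ltnP (size u) n.
  by rewrite !take_oversize ?size_tree_aut ?size_rcons.
have [c ->] := f_rcons u.
by rewrite -!cats1 !takel_cat ?size_tree_aut.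
Qed.

Lemma tree_aut_inj : injective f.
Proof.
case: f_aut => _ f_rcons v w fvw.
have : size v = size w by rewrite -(size_tree_aut v) fvw size_tree_aut.
elim/last_ind: v w fvw => [|u x IHu] w; first by move=> _ /esym/size0nil.
case/lastP: w => [|u' y]; rewrite ?size_rcons // => fuxy [eq_size].
have [c hc] := f_rcons u; have [c' hc'] := f_rcons u'.
move: (fuxy); rewrite hc hc' => /rcons_inj[] /IHu /(_ eq_size) eq_u _; subst u'.
by move: fuxy; rewrite !hc => /rcons_inj[] /addIb ->.
Qed.

End TreeAutomorphism.

Lemma tree_automorphism_actA : tree_automorphism actA.
Proof.
split=> //; elim=> [|[] u [c IHu]]; first by exists true; case.
  by exists false => x; rewrite /= addbF.
by exists c => x /=; rewrite IHu.
Qed.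

Lemma tree_automorphism_actB : tree_automorphism actB.
Proof.
split=> //; elim=> [|[] u [c IHu]]; first by exists false; case.
  by have [c' hc'] := tree_automorphism_actA.2 u; exists c' => x /=; rewrite hc'.
by exists c => x /=; rewrite IHu.
Qed.

Lemma iter2_actA k x w : iter (2 * k) actA (x :: w) = x :: iter k actA w.
Proof. by elim: k => [|k IHk] //; rewrite mulnS !iterS IHk; case: (x). Qed.

Lemma actA_transitive v w : size v = size w -> exists k, iter k actA v = w.
Proof.
elim: w v => [|y w IHw] [|x v] //=; first by exists 0.
move=> [eq_size]; have [<-|neq_xy] := eqVneq x y.
  by have [k hk] := IHw _ eq_size; exists (2 * k); rewrite iter2_actA hk.
have [v' hv' size_v'] : exists2 v', actA (x :: v) = ~~ x :: v' & size v' = size v.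
  by case: x {neq_xy}; eexists; rewrite //= size_actA.
have [k hk] := IHw v' (etrans size_v' eq_size).
exists (2 * k).+1; rewrite iterSr hv' iter2_actA hk.
by move: neq_xy; case: (x); case: (y).
Qed.

Definition flip_last (w : seq bool) : seq bool :=
  if w is x :: w' then rcons (belast x w') (~~ last x w') else [::].

Lemma flip_last_rcons u x : flip_last (rcons u x) = rcons u (~~ x).
Proof. by case: u => [|y u] //=; rewrite belast_rcons last_rcons. Qed.

Lemma size_flip_last w : size (flip_last w) = size w.
Proof. by case/lastP: w => [|u x] //; rewrite flip_last_rcons !size_rcons. Qed.

Lemma flip_lastK : involutive flip_last.
Proof. by case/lastP=> [|u x] //; rewrite !flip_last_rcons negbK. Qed.

Lemma tree_aut_flip_last f w :
  tree_automorphism f -> f (flip_last w) = flip_last (f w).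
Proof.
case=> f_nil f_rcons; case/lastP: w => [|u x]; first by rewrite f_nil.
by have [c hc] := f_rcons u; rewrite flip_last_rcons !hc flip_last_rcons addNb.
Qed.

Lemma take_flip_last n w : size w = n.+1 -> take n (flip_last w) = take n w.
Proof.
case/lastP: w => [|u x] //; rewrite size_rcons => -[<-].
by rewrite flip_last_rcons -!cats1 !take_size_cat.
Qed.

Lemma eq_take_flip_last n v w : size v = n.+1 -> size w = n.+1 ->
  take n w = take n v -> w = v \/ w = flip_last v.
Proof.
case/lastP: v => [|u x] //; case/lastP: w => [|u' y] //.
rewrite !size_rcons => -[size_u] [size_u'].
rewrite -!cats1 !take_size_cat // => <-; rewrite !cats1 flip_last_rcons.
by case: x; case: y; [left|right|right|left].
Qed.

Definition gen_seq_act (s : bool) : seq bool -> seq bool :=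
  if s then actB else actA.

Lemma tree_automorphism_gen s : tree_automorphism (gen_seq_act s).
Proof. by case: s; [exact: tree_automorphism_actB | exact: tree_automorphism_actA]. Qed.

Lemma val_gen_act n s (t : n.-tuple bool) : val (gen_act s t) = gen_seq_act s t.
Proof. by case: s. Qed.

Lemma gen_act_inj n s : injective (@gen_act n s).
Proof.
move=> t t' /(congr1 val); rewrite !val_gen_act.
by move/(@tree_aut_inj _ (tree_automorphism_gen s))/val_inj.
Qed.

Lemma projV_val n m (t : m.-tuple bool) : n <= m -> val (projV n t) = take n t.
Proof.
move=> le_n_m; apply: (@eq_from_nth _ false).
  by rewrite size_tuple size_takel // size_tuple.
move=> i; rewrite size_tuple => lt_i_n.
by rewrite -[i]/(nat_of_ord (Ordinal lt_i_n)) nth_mktuple nth_take.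
Qed.

Lemma projV_surj n m (u : n.-tuple bool) : n <= m -> exists t : m.-tuple bool, projV n t = u.
Proof.
move=> le_n_m; exists [tuple nth false u i | i < m].
apply: eq_from_tnth => i; have lt_i_m := leq_trans (ltn_ord i) le_n_m.
by rewrite tnth_mktuple -[nat_of_ord i]/(nat_of_ord (Ordinal lt_i_m)) nth_mktuple -tnth_nth.
Qed.

Lemma projV_gen_act n m s (t : m.-tuple bool) :
  n <= m -> projV n (gen_act s t) = gen_act s (projV n t).
Proof.
move=> le_n_m; apply: val_inj.
by rewrite val_gen_act !projV_val // val_gen_act take_tree_aut //; apply: tree_automorphism_gen.
Qed.

Lemma unramified_covering_projV m n : n <= m ->
  unramified_covering (@sorg m) (@srev m) (@sorg n) (@srev n) (@projV n m) (@projD n m).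
Proof.
move=> le_n_m; split.
- by split=> -[[v s] []] //=; rewrite projV_gen_act.
- by move=> u; apply: projV_surj.
move=> v [[u s] []] /= proj_v.
  exists ((v, s), true); split; first by rewrite /= proj_v.
  by case=> [[v' s'] o'] [/= <-] [_ -> ->].
have [v' def_v] : exists v', gen_act s v' = v.
  by have [g _ gK] := injF_bij (@gen_act_inj m s); exists (g v).
have proj_v' : projV n v' = u.
  by apply: (@gen_act_inj n s); rewrite -projV_gen_act // def_v.
exists ((v', s), false); split; first by rewrite /= def_v proj_v'.
case=> [[v'' s'] o'] [org_eq [_ eq_s eq_o]]; subst s' o'.
by move: org_eq; rewrite /= -def_v => /gen_act_inj ->.
Qed.

Definition tflip n (t : n.-tuple bool) : n.-tuple bool :=
  @Tuple n bool (flip_last t) (introT eqP (etrans (size_flip_last t) (size_tuple t))).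
Arguments tflip {n}.

Lemma tflipK n : involutive (@tflip n).
Proof. by move=> t; apply: val_inj; rewrite /= flip_lastK. Qed.

Lemma gen_act_tflip n s (t : n.-tuple bool) : gen_act s (tflip t) = tflip (gen_act s t).
Proof.
apply: val_inj; rewrite /= !val_gen_act tree_aut_flip_last //.
exact: tree_automorphism_gen.
Qed.

Lemma projV_tflip n (t : n.+1.-tuple bool) : projV n (tflip t) = projV n t.
Proof. by apply: val_inj; rewrite !projV_val //= take_flip_last ?size_tuple. Qed.

Lemma tflip_neq n (t : n.+1.-tuple bool) : tflip t != t.
Proof.
case: t => w size_w; apply/eqP => /(congr1 val) /=.
by case/lastP: w size_w => [|u x] // _; rewrite flip_last_rcons => /rcons_inj[]; case: x.
Qed.

Lemma projV_succ_eq n (t w : n.+1.-tuple bool) :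
  projV n w = projV n t -> w = t \/ w = tflip t.
Proof.
move/(congr1 val); rewrite !projV_val //.
move/(@eq_take_flip_last n t w (size_tuple t) (size_tuple w)).
by case=> eq_w; [left|right]; apply: val_inj.
Qed.

Lemma sheeted_projV_succ n : sheeted (@projV n n.+1) 2.
Proof.
move=> u; have [v <-] := @projV_surj n n.+1 u (leqnSn n).
rewrite (@eq_card _ _ (pred2 v (tflip v))); first by rewrite card2 eq_sym tflip_neq.
move=> w; rewrite !inE; apply/eqP/orP => [/projV_succ_eq[]->|[]/eqP->];
  by rewrite ?eqxx ?projV_tflip; auto.
Qed.

Lemma iter_tA_transitive n (v w : n.-tuple bool) : exists k, iter k (@tA n) v = w.
Proof.
have [k hk] := @actA_transitive v w (etrans (size_tuple v) (esym (size_tuple w))).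
exists k; apply: val_inj; rewrite /= -hk.
by elim: k {hk} => //= k <-.
Qed.

Lemma commute_tA_eq n (f g : SVert n -> SVert n) v :
  (forall w, f (tA w) = tA (f w)) -> (forall w, g (tA w) = tA (g w)) ->
  f v = g v -> f =1 g.
Proof.
move=> fA gA fg_v w; have [k <-] := iter_tA_transitive v w.
by elim: k => //= k IHk; rewrite fA gA IHk.
Qed.

Definition dart_map n (f : SVert n -> SVert n) (d : SDart n) : SDart n :=
  let: ((v, s), o) := d in ((f v, s), o).

Definition deck_of n (f : SVert n -> SVert n)
  : {ffun SVert n -> SVert n} * {ffun SDart n -> SDart n} :=
  ([ffun v => f v], [ffun d => dart_map f d]).

Notation deck_projV n m :=
  (deck_group (@sorg m) (@srev m) (@projV n m) (@projD n m)).

Lemma eq_deck_of n (f g : SVert n -> SVert n) : f =1 g -> deck_of f = deck_of g.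
Proof.
move=> fg; congr (_, _); apply/ffunP; [move=> v | case=> [[v s] o]];
  by rewrite !ffunE /= fg.
Qed.

Lemma deck_of_comp n (f g : SVert n -> SVert n) :
  deck_comp (deck_of f) (deck_of g) = deck_of (f \o g).
Proof. by congr (_, _); apply/ffunP; [move=> v | case=> [[v s] o]]; rewrite !ffunE. Qed.

Lemma deck_of_in m n (f : SVert m -> SVert m) :
  injective f -> (forall s v, f (gen_act s v) = gen_act s (f v)) ->
  (forall v, projV n (f v) = projV n v) -> deck_of f \in deck_projV n m.
Proof.
move=> f_inj f_gen f_proj; rewrite inE /is_deck /=.
apply/and5P; split.
- by apply/injectiveP => v w; rewrite !ffunE => /f_inj.
- apply/injectiveP => -[[v s] o] [[w t] p]; rewrite !ffunE /=.
  by case=> /f_inj -> -> ->.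
- by apply/forallP => -[[v s] []]; rewrite !ffunE //= f_gen.
- by apply/forallP => -[[v s] o]; rewrite !ffunE.
apply/andP; split; first by apply/forallP => v; rewrite ffunE f_proj.
by apply/forallP => -[[v s] o]; rewrite ffunE /= f_proj.
Qed.

Section DeckTransformations.

Variables (m n : nat) (sigma : {ffun SVert m -> SVert m} * {ffun SDart m -> SDart m}).
Hypothesis deck_sigma : sigma \in deck_projV n m.

(* A deck transformation preserves the labels (generator, orientation) of a
   dart since [projD] does; the rest follows from compatibility with [sorg] and
   [srev]. *)
Lemma deck_dart d : sigma.2 d = dart_map sigma.1 d.
Proof.
move: deck_sigma; rewrite inE => /and5P[_ _ /forallP org_s /forallP rev_s].
move=> /andP[_ /forallP proj_s].
have deck_true v s : sigma.2 ((v, s), true) = ((sigma.1 v, s), true).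
  move: (proj_s ((v, s), true)) (org_s ((v, s), true)).
  by case: (sigma.2 _) => [[v' s'] o'] /eqP[_ -> ->] /eqP /= ->.
case: d => [[v s] []]; first exact: deck_true.
by move: (rev_s ((v, s), true)) => /eqP /= ->; rewrite deck_true.
Qed.

Lemma deck_gen_act s v : sigma.1 (gen_act s v) = gen_act s (sigma.1 v).
Proof.
move: deck_sigma; rewrite inE => /and5P[_ _ /forallP org_s _ _].
by move: (org_s ((v, s), false)) => /eqP; rewrite deck_dart.
Qed.

Lemma deck_of_deck : sigma = deck_of sigma.1.
Proof.
case: sigma deck_dart => f g /= g_dart.
by congr (_, _); apply/ffunP => x; rewrite ffunE ?g_dart.
Qed.

Lemma projV_deck v : projV n (sigma.1 v) = projV n v.
Proof. by move: deck_sigma; rewrite inE => /and5P[_ _ _ _ /andP[/forallP/(_ v)/eqP]]. Qed.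

End DeckTransformations.

Lemma deck_group_projV_succ n :
  deck_projV n n.+1 = [set deck_of id; deck_of tflip].
Proof.
apply/setP => sigma; rewrite in_set2; apply/idP/orP => [deck_sigma|].
  pose v0 := [tuple false | _ < n.+1].
  have sigma_A w : sigma.1 (tA w) = tA (sigma.1 w) := deck_gen_act deck_sigma false w.
  rewrite (deck_of_deck deck_sigma).
  have [sigma_v0|sigma_v0] := projV_succ_eq (projV_deck deck_sigma v0).
    by left; rewrite (@eq_deck_of _ _ id) //; apply: commute_tA_eq sigma_A _ sigma_v0.
  have tflip_A (w : SVert n.+1) : tflip (tA w) = tA (tflip w) := esym (gen_act_tflip false w).
  by right; rewrite (@eq_deck_of _ _ tflip) //; apply: commute_tA_eq sigma_A tflip_A sigma_v0.
case=> /eqP ->; apply: deck_of_in => //.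
- exact: (can_inj (@tflipK n.+1)).
- by move=> s v; rewrite gen_act_tflip.
- exact: projV_tflip.
Qed.

Lemma deck_of_id_neq_tflip n : deck_of (@id (SVert n.+1)) != deck_of tflip.
Proof.
apply/eqP => /(congr1 fst)/ffunP/(_ [tuple false | _ < n.+1]).
by rewrite !ffunE => /esym/eqP; rewrite (negbTE (tflip_neq _)).
Qed.

Lemma Zp2_cases (x : 'Z_2) : x = 0%R \/ x = 1%R.
Proof. by case: x => [[|[|k]] lt_k]; [left|right|]; try apply: val_inj. Qed.

Theorem proposition6p1 :
  (forall m n : nat, (1 <= n)%N -> (n < m)%N ->
     unramified_covering (@sorg m) (@srev m) (@sorg n) (@srev n)
       (@projV n m) (@projD n m)) /\
  (forall n : nat, (1 <= n)%N ->
     normal_covering (@sorg n.+1) (@srev n.+1) (@sorg n) (@srev n)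
       (@projV n n.+1) (@projD n n.+1) /\
     exists phi : 'Z_2 -> {ffun SVert n.+1 -> SVert n.+1} * {ffun SDart n.+1 -> SDart n.+1},
       [/\ injective phi,
           (forall x, phi x \in deck_group (@sorg n.+1) (@srev n.+1)
                                   (@projV n n.+1) (@projD n n.+1)),
           (forall s, s \in deck_group (@sorg n.+1) (@srev n.+1)
                                   (@projV n n.+1) (@projD n n.+1) ->
                      exists x, phi x = s) &
           (forall x y, phi (x + y)%R = deck_comp (phi x) (phi y))]).
Proof.
split=> [m n _ /ltnW|n _]; first exact: unramified_covering_projV.
split.
  split; first exact: unramified_covering_projV.
  exists 2; split; first exact: sheeted_projV_succ.
  by rewrite deck_group_projV_succ cards2 deck_of_id_neq_tflip.
exists (fun x => deck_of (if x == 0%R then id else @tflip n.+1)).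
rewrite deck_group_projV_succ; split.
- move=> x y; have := deck_of_id_neq_tflip n.
  by case: (Zp2_cases x) => ->; case: (Zp2_cases y) => -> //= /[swap] ->; rewrite eqxx.
- by move=> x; rewrite !inE; case: (x == 0%R); rewrite eqxx ?orbT.
- by move=> sigma /set2P[] ->; [exists 0%R | exists 1%R].
move=> x y; rewrite deck_of_comp; apply: eq_deck_of => v /=.
by case: (Zp2_cases x) => ->; case: (Zp2_cases y) => -> //=; rewrite tflipK.
Qed.
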